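(* There is an absolute constant $c>0$ such that the following holds. Let $G$ be a finite abelian group, let $B$ be a regular Bohr set of rank $d$, let $A \subset B$ have relative density at least $\alpha>0$, and let $B', B''$ be nonempty subsets of $B_{c\alpha/d}$. Then either (1) there is an $x \in B$ such that $1_A*\mu_{B'}(x) \geq \tfrac{3}{4}\alpha$ and $1_A*\mu_{B''}(x) \geq \tfrac{3}{4}\alpha$, or (2) $\|1_A*\mu_{B'}\|_\infty \geq \tfrac{9}{8}\alpha$ or $\|1_A*\mu_{B''}\|_\infty \geq \tfrac{9}{8}\alpha$.
   Context: $f*g(x)=\sum_{y} f(y)g(x-y)$; $1_X$ indicator, $\mu_X=1_X/|X|$; $\|F\|_\infty=\max|F|$. Bohr sets: $\mathrm{Bohr}(\Gamma,\rho)=\{x: |\gamma(x)-1|\le\rho\ \forall\gamma\in\Gamma\}$ for $\Gamma\subset\widehat G$, $(\Gamma,\rho)$ part of the data, rank $|\Gamma|$; $B_\tau=\mathrm{Bohr}(\Gamma,\tau\rho)$. $B$ of rank $d$ is regular if $1-12d|\tau|\le |B_{1+\tau}|/|B|\le 1+12d|\tau|$ for $|\tau|\le 1/(12d)$. *)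

From HB Require Import structures.
From mathcomp Require Import all_boot all_order all_algebra.
Set Implicit Arguments. Unset Strict Implicit. Unset Printing Implicit Defensive.
Import Order.TTheory GRing.Theory Num.Theory.
Local Open Scope ring_scope.

Definition is_character (G : finZmodType) (C : numClosedFieldType)
  (g : {ffun G -> C}) : Prop :=
  g 0 = 1 /\ forall x y : G, g (x + y) = g x * g y.

Definition Bohr (G : finZmodType) (C : numClosedFieldType)
  (Gamma : seq {ffun G -> C}) (rho : C) : {set G} :=
  [set x : G | all (fun g : {ffun G -> C} => `|g x - 1| <= rho) Gamma].

Definition Bohr_dil (G : finZmodType) (C : numClosedFieldType)
  (Gamma : seq {ffun G -> C}) (rho tau : C) : {set G} :=
  Bohr Gamma (tau * rho).

Definition regular_Bohr (G : finZmodType) (C : numClosedFieldType)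
  (Gamma : seq {ffun G -> C}) (rho : C) : Prop :=
  let d : C := (size Gamma)%:R in
  forall tau : C, tau \is Num.real -> `|tau| <= 1 / (12 * d) ->
    1 - 12 * d * `|tau|
      <= (#|Bohr_dil Gamma rho (1 + tau)|)%:R / (#|Bohr Gamma rho|)%:R
    /\ (#|Bohr_dil Gamma rho (1 + tau)|)%:R / (#|Bohr Gamma rho|)%:R
      <= 1 + 12 * d * `|tau|.

Definition indic (G : finZmodType) (C : numClosedFieldType) (X : {set G})
  : G -> C := fun x => if x \in X then 1 else 0.

Definition mu (G : finZmodType) (C : numClosedFieldType) (X : {set G})
  : G -> C := fun x => indic C X x / (#|X|)%:R.

Definition conv (G : finZmodType) (C : numClosedFieldType) (f g : G -> C)
  : G -> C := fun x => \sum_(y : G) f y * g (x - y).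

(* Let D = B_{1-delta} with delta = alpha/(400 d). Regularity gives
   |D| >= (1 - 12 d delta)|B|, so A meets D in at least (1 - 3/100) alpha |B|
   points, and D + B' lies in B. Hence the sum of 1_A * mu_B' over B is at least
   |A :&: D|. If 1_A * mu_B' stays below 9/8 alpha, this forces it to be at least
   3/4 alpha on more than half of B; the same holds for B'', and two subsets of B
   of more than half its size meet. *)

From HB Require Import structures.
From mathcomp Require Import all_boot all_order all_algebra.
From mathcomp Require Import ring zify.

Set Implicit Arguments.
Unset Strict Implicit.
Unset Printing Implicit Defensive.
Import Order.TTheory GRing.Theory Num.Theory.
Local Open Scope ring_scope.

Section BohrSets.

Variables (G : finZmodType) (C : numClosedFieldType).
Implicit Types (Gamma : seq {ffun G -> C}) (g : {ffun G -> C}).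

(* g(y)^|G| = 1, since translating by y permutes the factors of prod_x g(x). *)
Lemma character_norm1 {g} y : is_character g -> `|g y| = 1.
Proof.
move=> [g0 gD].
have gN0 x : g x != 0.
  apply/eqP=> gx0; have := gD x (- x).
  by rewrite subrr g0 gx0 mul0r; apply/eqP; rewrite oner_eq0.
have prod_neq0 : \prod_x g x != 0 by apply/prodf_neq0 => x _.
have prod_shift : \prod_x g x = \prod_x g x * g y ^+ #|G|.
  rewrite {1}(reindex_inj (addIr y)) /=.
  by under eq_bigr do rewrite gD; rewrite big_split /= prodr_const.
have gy_root : g y ^+ #|G| = 1 by apply: (mulfI prod_neq0); rewrite mulr1 -prod_shift.
have G_gt0 : (0 < #|G|)%N by apply/card_gt0P; exists 0.
apply/eqP; rewrite -(pexpr_eq1 G_gt0 (normr_ge0 _)) -normrX gy_root normr1.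
by [].
Qed.

Lemma Bohr_subset Gamma r1 r2 : r1 <= r2 -> Bohr Gamma r1 \subset Bohr Gamma r2.
Proof.
move=> r12; apply/subsetP => x; rewrite !inE => /allP h.
by apply/allP => g gG; apply: le_trans (h g gG) r12.
Qed.

Lemma Bohr_add Gamma r1 r2 y b :
  (forall g, g \in Gamma -> is_character g) ->
  y \in Bohr Gamma r1 -> b \in Bohr Gamma r2 -> y + b \in Bohr Gamma (r1 + r2).
Proof.
move=> chars; rewrite !inE => /allP hy /allP hb; apply/allP => g gG.
have [_ gD] := chars g gG.
have -> : g (y + b) - 1 = g y * (g b - 1) + (g y - 1) by rewrite gD; ring.
apply: le_trans (ler_normD _ _) _.
rewrite normrM (character_norm1 y (chars g gG)) mul1r addrC.
by apply: lerD; [apply: hy | apply: hb].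
Qed.

Lemma regular_Bohr_card_shrink Gamma rho delta :
  regular_Bohr Gamma rho -> (0 < size Gamma)%N -> 0 <= delta ->
  12 * (size Gamma)%:R * delta <= 1 -> (0 < #|Bohr Gamma rho|)%N ->
  (1 - 12 * (size Gamma)%:R * delta) * (#|Bohr Gamma rho|)%:R
    <= (#|Bohr_dil Gamma rho (1 - delta)|)%:R.
Proof.
move=> reg d_gt0 delta_ge0 delta_small B_gt0.
have d12_gt0 : 0 < 12 * (size Gamma)%:R :> C by rewrite mulr_gt0 ?ltr0n.
have delta_le : `|- delta| <= 1 / (12 * (size Gamma)%:R).
  by rewrite normrN ger0_norm // ler_pdivlMr // mulrC.
have Ndelta_real : - delta \is Num.real by rewrite realN ger0_real.
have [lb _] := reg (- delta) Ndelta_real delta_le.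
by rewrite normrN ger0_norm // ler_pdivlMr ?ltr0n in lb.
Qed.

Lemma Bohr_dil_add Gamma rho delta y b :
  (forall g, g \in Gamma -> is_character g) ->
  y \in Bohr_dil Gamma rho (1 - delta) -> b \in Bohr_dil Gamma rho delta ->
  y + b \in Bohr Gamma rho.
Proof. by move=> chars yB bB; have := Bohr_add chars yB bB; rewrite -mulrDl subrK mul1r. Qed.

Lemma card_setI_Bohr_shrink Gamma rho delta (A : {set G}) (alpha : C) :
  regular_Bohr Gamma rho -> (0 < size Gamma)%N -> 0 < rho -> 0 <= delta ->
  12 * (size Gamma)%:R * delta <= 1 -> (0 < #|Bohr Gamma rho|)%N ->
  A \subset Bohr Gamma rho -> alpha <= (#|A|)%:R / (#|Bohr Gamma rho|)%:R ->
  (alpha - 12 * (size Gamma)%:R * delta) * (#|Bohr Gamma rho|)%:R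
    <= (#|A :&: Bohr_dil Gamma rho (1 - delta)|)%:R.
Proof.
move=> reg d_gt0 rho_gt0 delta_ge0 delta_small B_gt0 AB dens.
have card_D := regular_Bohr_card_shrink reg d_gt0 delta_ge0 delta_small B_gt0.
set B := Bohr Gamma rho in AB dens card_D *; set D := Bohr_dil _ _ _ in card_D *.
set e := 12 * _ * delta in card_D *.
have D_sub : D \subset B by rewrite Bohr_subset // ler_piMl ?(ltW rho_gt0) // gerBl.
rewrite ler_pdivlMr ?ltr0n // in dens.
rewrite -(lerD2l (#|B|)%:R).
have -> : (#|B|)%:R + (alpha - e) * (#|B|)%:R = alpha * (#|B|)%:R + (1 - e) * (#|B|)%:R.
  by ring.
apply: le_trans (lerD dens card_D) _; rewrite -!natrD ler_nat.
by rewrite -cardsUI leq_add2r subset_leq_card // subUset AB D_sub.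
Qed.

End BohrSets.

Section Convolution.

Variables (G : finZmodType) (C : numClosedFieldType).
Implicit Types (A B D X : {set G}).

Lemma indic_ge0 X x : 0 <= indic C X x.
Proof. by rewrite /indic; case: ifP. Qed.

Lemma sum_indic X : \sum_x indic C X x = (#|X|)%:R.
Proof. by rewrite /indic -big_mkcond /= sumr_const. Qed.

Lemma mu_ge0 X x : 0 <= mu C X x.
Proof. by rewrite divr_ge0 ?indic_ge0. Qed.

Lemma sum_mu X : X != set0 -> \sum_x mu C X x = 1.
Proof.
by move=> X0; rewrite /mu -mulr_suml sum_indic divff // pnatr_eq0 -lt0n card_gt0.
Qed.

Lemma conv_indic_mu_ge0 A B x : 0 <= conv (indic C A) (mu C B) x.
Proof. by apply: sumr_ge0 => y _; rewrite mulr_ge0 ?indic_ge0 ?mu_ge0. Qed.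

Lemma conv_indic_mu_le A B (M : C) x :
  0 <= M -> ~~ (M <= `|conv (indic C A) (mu C B) x|) -> conv (indic C A) (mu C B) x <= M.
Proof.
move=> M_ge0; rewrite ger0_norm ?conv_indic_mu_ge0 // => not_ge.
by apply: ltW; rewrite real_ltNge ?ger0_real ?conv_indic_mu_ge0.
Qed.

(* Each y in A :&: D contributes its full mass, since y + B' stays in B. *)
Lemma card_setI_le_sum_conv A B B' D :
  B' != set0 -> (forall y b, y \in D -> b \in B' -> y + b \in B) ->
  (#|A :&: D|)%:R <= \sum_(x in B) conv (indic C A) (mu C B') x.
Proof.
move=> B'_neq0 DB'_sub; rewrite /conv exchange_big /= -sum_indic.
apply: ler_sum => y _; rewrite -mulr_sumr.
have [yAD | yNAD] := boolP (y \in A :&: D); last first.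
  by rewrite {1}/indic (negbTE yNAD) mulr_ge0 ?indic_ge0 ?sumr_ge0 // => x _; apply: mu_ge0.
move: (yAD); rewrite inE => /andP [yA yD].
rewrite /indic yAD yA mul1r.
have -> : \sum_(x in B) mu C B' (x - y) = \sum_x mu C B' (x - y).
  rewrite big_mkcond; apply: eq_bigr => x _; case: ifP => // xNB.
  rewrite /mu /indic; case: ifP => [xyB' | _]; last by rewrite mul0r.
  by move: (DB'_sub _ _ yD xyB'); rewrite addrC subrK xNB.
rewrite (reindex_inj (addIr y)) /=.
by under eq_bigr do rewrite addrK; rewrite sum_mu.
Qed.

End Convolution.

Lemma sum_le_level_set (T : finType) (R : numDomainType) (f : T -> R)
    (B : {set T}) (a M : R) :
  0 <= a -> (forall x, 0 <= f x) -> (forall x, f x <= M) ->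
  \sum_(x in B) f x
    <= a * (#|B|)%:R + (M - a) * (#|[set x in B | a <= f x]|)%:R.
Proof.
move=> a_ge0 f_ge0 f_leM.
have cardS : #|[set x in B | a <= f x]| = (\sum_(x in B) nat_of_bool (a <= f x)%R)%N.
  rewrite -sum1_card (eq_bigl (fun x => (x \in B) && (a <= f x)%R)) => [|x]; last by rewrite inE.
  by rewrite big_mkcondr; apply: eq_bigr => x _; case: ifP.
rewrite cardS -[#|B|]sum1_card !natr_sum !mulr_sumr -big_split /=.
apply: ler_sum => x _.
have [af | aNf] := boolP (a <= f x); rewrite /= ?mulr1 ?mulr0 ?addr0.
  by rewrite addrC subrK.
by apply: ltW; rewrite real_ltNge ?aNf // ger0_real.
Qed.

Lemma density_bounds (T : finType) (F : numFieldType) (A B : {set T}) (alpha : F) :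
  0 < alpha -> A \subset B -> alpha <= (#|A|)%:R / (#|B|)%:R ->
  (0 < #|B|)%N /\ alpha <= 1.
Proof.
move=> alpha_gt0 AB dens; have B_gt0 : (0 < #|B|)%N.
  rewrite lt0n; apply/eqP => B_empty; move: dens.
  by rewrite B_empty invr0 mulr0 => /(lt_le_trans alpha_gt0); rewrite ltxx.
split=> //; apply: le_trans dens _.
by rewrite ler_pdivrMr ?ltr0n // mul1r ler_nat subset_leq_card.
Qed.

Lemma setI_neq0_card_gt_half (T : finType) (X S1 S2 : {set T}) :
  S1 \subset X -> S2 \subset X -> (#|X| < 2 * #|S1|)%N -> (#|X| < 2 * #|S2|)%N ->
  S1 :&: S2 != set0.
Proof.
move=> S1X S2X; rewrite -card_gt0.
have := cardsUI S1 S2.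
have : (#|S1 :|: S2| <= #|X|)%N by rewrite subset_leq_card // subUset S1X S2X.
lia.
Qed.

(* The constants fit because (97/100 - 3/4) / (9/8 - 3/4) = 44/75 > 1/2. *)
Lemma conv_level_set_gt_half (G : finZmodType) (C : numClosedFieldType)
    (A B B' D : {set G}) (alpha : C) :
  0 < alpha -> B' != set0 ->
  (forall y b, y \in D -> b \in B' -> y + b \in B) ->
  97 / 100 * alpha * (#|B|)%:R <= (#|A :&: D|)%:R ->
  (forall x, conv (indic C A) (mu C B') x <= 9 / 8 * alpha) ->
  (0 < #|B|)%N ->
  (#|B| < 2 * #|[set x in B | (3 / 4 * alpha <= conv (indic C A) (mu C B') x)%R]|)%N.
Proof.
move=> alpha_gt0 B'_neq0 DB'_sub AD_large conv_le B_gt0.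
set S := [set x in B | _].
have level_bound : 97 / 100 * alpha * (#|B|)%:R
    <= 3 / 4 * alpha * (#|B|)%:R + (9 / 8 * alpha - 3 / 4 * alpha) * (#|S|)%:R.
  apply: le_trans AD_large _; apply: le_trans (card_setI_le_sum_conv C A B'_neq0 DB'_sub) _.
  apply: sum_le_level_set => //; first by rewrite mulr_ge0 ?divr_ge0 ?ltW.
  exact: conv_indic_mu_ge0.
have E1 : 97 / 100 * alpha * (#|B|)%:R = alpha / 200 * (194 * #|B|)%:R.
  by rewrite natrM; field.
have E2 : 3 / 4 * alpha * (#|B|)%:R + (9 / 8 * alpha - 3 / 4 * alpha) * (#|S|)%:R
    = alpha / 200 * (150 * #|B| + 75 * #|S|)%:R.
  by rewrite natrD !natrM; field.
move: level_bound; rewrite E1 E2 ler_pM2l ?divr_gt0 // ler_nat.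
lia.
Qed.

Theorem lemma12 :
  exists c : rat, 0 < c /\
  forall (C : numClosedFieldType) (G : finZmodType)
         (Gamma : seq {ffun G -> C}) (rho : C),
    uniq Gamma ->
    (forall g, g \in Gamma -> is_character g) ->
    (0 < size Gamma)%N ->
    0 < rho ->
    regular_Bohr Gamma rho ->
  forall (alpha : C) (A B' B'' : {set G}),
    0 < alpha ->
    A \subset Bohr Gamma rho ->
    alpha <= (#|A|)%:R / (#|Bohr Gamma rho|)%:R ->
    B' != set0 -> B'' != set0 ->
    B' \subset Bohr_dil Gamma rho (ratr c * alpha / (size Gamma)%:R) ->
    B'' \subset Bohr_dil Gamma rho (ratr c * alpha / (size Gamma)%:R) ->
    (exists2 x : G, x \in Bohr Gamma rho &
       (3 / 4 * alpha <= conv (indic C A) (mu C B') x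
        /\ 3 / 4 * alpha <= conv (indic C A) (mu C B'') x))
    \/ ((exists x : G, 9 / 8 * alpha <= `|conv (indic C A) (mu C B') x|)
        \/ (exists x : G, 9 / 8 * alpha <= `|conv (indic C A) (mu C B'') x|)).
Proof.
exists 400%:R^-1; split; first by rewrite invr_gt0 ltr0n.
move=> C G Gamma rho _ chars d_gt0 rho_gt0 reg alpha A B' B'' alpha_gt0 AB dens
  B'_neq0 B''_neq0 B'_sub B''_sub.
rewrite fmorphV rmorph_nat in B'_sub B''_sub.
set B := Bohr Gamma rho in AB dens reg *; set d := size Gamma in d_gt0 reg B'_sub B''_sub.
set delta := 400%:R^-1 * alpha / d%:R in B'_sub B''_sub.
have [B_gt0 alpha_le1] := density_bounds alpha_gt0 AB dens.
have d12delta : 12 * d%:R * delta = 3 / 100 * alpha.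
  by rewrite /delta; field; rewrite pnatr_eq0 -lt0n.
have delta_ge0 : 0 <= delta by rewrite /delta !mulr_ge0 ?invr_ge0 ?ler0n ?ltW.
have delta_small : 12 * d%:R * delta <= 1.
  rewrite d12delta; apply: le_trans alpha_le1.
  by rewrite ler_piMl ?(ltW alpha_gt0) // ler_pdivrMr ?ltr0n // mul1r ler_nat.
have AD_large := card_setI_Bohr_shrink reg d_gt0 rho_gt0 delta_ge0 delta_small B_gt0 AB dens.
rewrite d12delta (_ : alpha - 3 / 100 * alpha = 97 / 100 * alpha) in AD_large; last by field.
have half (E : {set G}) : E != set0 -> E \subset Bohr_dil Gamma rho delta ->
    (forall x, (9 / 8 * alpha <= `|conv (indic C A) (mu C E) x|) = false) ->
    (#|B| < 2 * #|[set x in B | (3 / 4 * alpha <= conv (indic C A) (mu C E) x)%R]|)%N.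
  move=> E_neq0 /subsetP E_sub small.
  apply: (conv_level_set_gt_half alpha_gt0 E_neq0 _ AD_large _ B_gt0) => [y b yD /E_sub|x].
    exact: Bohr_dil_add.
  by apply: conv_indic_mu_le; rewrite ?small // mulr_ge0 ?divr_ge0 ?ltW.
case: (pickP (fun x => 9 / 8 * alpha <= `|conv (indic C A) (mu C B') x|))
  => [x big' | small'].
  by right; left; exists x.
case: (pickP (fun x => 9 / 8 * alpha <= `|conv (indic C A) (mu C B'') x|))
  => [x big'' | small''].
  by right; right; exists x.
left; have /set0Pn [x] : [set x in B | (3 / 4 * alpha <= conv (indic C A) (mu C B') x)%R]
    :&: [set x in B | (3 / 4 * alpha <= conv (indic C A) (mu C B'') x)%R] != set0.
  by apply: (setI_neq0_card_gt_half _ _ (half _ B'_neq0 B'_sub small')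
    (half _ B''_neq0 B''_sub small''));
    apply/subsetP => y; rewrite inE => /andP [].
by move=> /setIP [/setIdP [xB h'] /setIdP [_ h'']]; exists x.
Qed.
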